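(* Let $\nu$ be a successor function on $\{1,\dots,n\}$ with $l$ cycles. There is a (noncanonical) $\mathbb{F}$-algebra isomorphism $\Omega_\nu\cong\Omega_1^{\otimes(n-l)}\otimes\Theta^{\otimes l}$.
   Context: $\mathbb{F}=\mathbb{F}_2$. A successor function is a permutation $\nu$ of $\{1,\dots,n\}$. $\Omega_\nu$ is the $\mathbb{F}$-algebra generated by $z_1,\dots,z_n,w_1,\dots,w_n$ modulo $[z_i,z_j]=0$, $[w_i,w_j]=0$, $z_i^2=w_i^2=0$, $[z_i,w_j]=\delta_{\nu(i),j}-\delta_{i,j}$, where $[x,y]=xy+yx$. $\Theta=\Lambda(\mathbb{F}^2)$ is the exterior algebra on two generators $w,z$ (the Clifford algebra of the zero quadratic form on $\mathbb{F}^2$), and $\Omega_1$ is the algebra generated by $w,z$ modulo $w^2=z^2=0$, $wz+zw=1$ (the Clifford algebra of $Q_1(x,y)=xy$). *)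

From HB Require Import structures.
From mathcomp Require Import all_boot all_order all_algebra all_fingroup.
Set Implicit Arguments. Unset Strict Implicit. Unset Printing Implicit Defensive.
Import GRing.Theory.
Local Open Scope ring_scope.

Notation F2 := 'F_2.

Definition acomm (R : pzRingType) (x y : R) : R := x * y + y * x.

Definition alg_hom (A B : algType F2) (f : A -> B) : Prop :=
  [/\ forall x y, f (x + y) = f x + f y,
      forall x y, f (x * y) = f x * f y,
      f 1 = 1 &
      forall (a : F2) x, f (a *: x) = a *: f x].

Definition alg_iso (A B : algType F2) (f : A -> B) : Prop :=
  alg_hom f /\ bijective f.

(* (A, g) is the F-algebra presented by generators indexed by I subject to
   the relations [rel] : universal property of a presentation. *)
Definition presents (I : Type) (rel : forall B : algType F2, (I -> B) -> Prop)
    (A : algType F2) (g : I -> A) : Prop :=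
  rel A g /\
  forall (B : algType F2) (h : I -> B), rel B h ->
    (exists f : A -> B, alg_hom f /\ forall i, f (g i) = h i) /\
    (forall f1 f2 : A -> B, alg_hom f1 -> alg_hom f2 ->
       (forall i, f1 (g i) = h i) -> (forall i, f2 (g i) = h i) ->
       forall x, f1 x = f2 x).

(* Relations of Omega_nu; generator inl i is z_i, inr i is w_i. *)
Definition Omega_rel (n : nat) (nu : {perm 'I_n}) (B : algType F2)
    (g : 'I_n + 'I_n -> B) : Prop :=
  [/\ forall i j, acomm (g (inl i)) (g (inl j)) = 0,
      forall i j, acomm (g (inr i)) (g (inr j)) = 0,
      forall i, g (inl i) * g (inl i) = 0,
      forall i, g (inr i) * g (inr i) = 0 &
      forall i j, acomm (g (inl i)) (g (inr j)) = (nu i == j)%:R - (i == j)%:R].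

(* Clifford algebra on F^2 with generators w (= true), z (= false):
   w^2 = z^2 = 0, wz + zw = c.  c = 1 : Omega_1 (form Q_1(x,y)=xy);
   c = 0 : Theta = Lambda(F^2). *)
Definition Cliff2_rel (c : F2) (B : algType F2) (g : bool -> B) : Prop :=
  [/\ g true * g true = 0, g false * g false = 0 & acomm (g true) (g false) = c%:A].

(* (T, iota) is the tensor product over F of the finite family of algebras
   (A k)_{k < m}, via its universal property. *)
Definition is_tensor_family (m : nat) (A : 'I_m -> algType F2) (T : algType F2)
    (iota : forall k, A k -> T) : Prop :=
  [/\ forall k, alg_hom (iota k),
      forall k k' (x : A k) (y : A k'), k != k' ->
        iota k x * iota k' y = iota k' y * iota k x &
      forall (C : algType F2) (f : forall k, A k -> C),
        (forall k, alg_hom (f k)) ->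
        (forall k k' (x : A k) (y : A k'), k != k' -> f k x * f k' y = f k' y * f k x) ->
        (exists h : T -> C, alg_hom h /\ forall k x, h (iota k x) = f k x) /\
        (forall h1 h2 : T -> C, alg_hom h1 -> alg_hom h2 ->
           (forall k x, h1 (iota k x) = f k x) -> (forall k x, h2 (iota k x) = f k x) ->
           forall t, h1 t = h2 t)].

(* number of cycles of a permutation (fixed points count as cycles) *)
Definition ncycles (n : nat) (nu : {perm 'I_n}) : nat := #|porbits nu|.

From HB Require Import structures.
From mathcomp Require Import all_boot all_order all_algebra all_fingroup.
From Stdlib Require Import IndefiniteDescription.
Import GRing.Theory.
Local Open Scope ring_scope.
Set Implicit Arguments. Unset Strict Implicit.

(* The mixed anticommutators [z_i, w_j] of Omega_nu form the matrix
   M = P_nu - 1 over F_2.  Replacing z by L z and w by w U for invertible L, U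
   turns M into L M U, so the algebra only depends on the rank of M; for the
   rank normal form diag(1,..,1,0,..,0) it is the tensor product of one
   Clifford algebra Omega_1 or Theta per diagonal entry.  The row vectors
   fixed by P_nu are those constant on the cycles of nu, so rank M = n - l. *)

Section Anticommutator.
Variable A : algType F2.
Implicit Types x y : A.

Lemma pchar_algF2 : (2 \in [pchar A])%N.
Proof.
rewrite inE /= -[2%:R]scaler_nat.
have -> : (2%:R : F2) = 0 by apply/eqP.
by rewrite scale0r.
Qed.

Lemma acommC x y : acomm x y = acomm y x.
Proof. by rewrite /acomm addrC. Qed.

Lemma acommxx x : acomm x x = 0.
Proof. exact: (addrr_pchar2 pchar_algF2). Qed.

Lemma acomm_eq0_comm x y : acomm x y = 0 <-> GRing.comm x y.
Proof.
rewrite /GRing.comm /acomm; split=> [/eqP|->]; last exact: (addrr_pchar2 pchar_algF2).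
by rewrite addr_eq0 (oppr_pchar2 pchar_algF2) => /eqP.
Qed.

Lemma acommZ (a b : F2) x y : acomm (a *: x) (b *: y) = (a * b) *: acomm x y.
Proof.
rewrite /acomm -!scalerAl -!scalerAr !scalerA (mulrC b) -scalerDr.
by congr (_ *: (_ + _)).
Qed.

Lemma acomm_sumr (I : Type) (s : seq I) (F : I -> A) x :
  acomm x (\sum_(j <- s) F j) = \sum_(j <- s) acomm x (F j).
Proof. by rewrite /acomm mulr_sumr mulr_suml -big_split. Qed.

Lemma acomm_suml (I : Type) (s : seq I) (F : I -> A) y :
  acomm (\sum_(i <- s) F i) y = \sum_(i <- s) acomm (F i) y.
Proof. by rewrite acommC acomm_sumr; apply: eq_bigr => i _; rewrite acommC. Qed.

Lemma acomm_sumZ n (a b : 'I_n -> F2) (x y : 'I_n -> A) :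
  acomm (\sum_i a i *: x i) (\sum_j b j *: y j) =
  \sum_i \sum_j (a i * b j) *: acomm (x i) (y j).
Proof.
rewrite acomm_suml; apply: eq_bigr => i _.
by rewrite acomm_sumr; apply: eq_bigr => j _; rewrite acommZ.
Qed.

Lemma sqr_sumZ n (a : 'I_n -> F2) (x : 'I_n -> A) :
  (forall i, x i * x i = 0) -> (forall i j, acomm (x i) (x j) = 0) ->
  (\sum_i a i *: x i) * (\sum_i a i *: x i) = 0.
Proof.
move=> x2 xx.
suff sqr0 s : (\sum_(i <- s) a i *: x i) * (\sum_(i <- s) a i *: x i) = 0 by [].
elim: s => [|i s IH]; first by rewrite big_nil mul0r.
rewrite big_cons; set v := \sum_(j <- s) _ in IH *.
have xv : acomm (a i *: x i) v = 0.
  by rewrite acomm_sumr big1 // => j _; rewrite acommZ xx scaler0.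
by rewrite mulrDl !mulrDr IH addr0 -scalerAl -scalerAr x2 !scaler0 add0r; exact: xv.
Qed.
End Anticommutator.

Section AlgHom.
Variables A B C : algType F2.
Implicit Types (f : A -> B) (h : B -> C).

Lemma alg_hom0 f : alg_hom f -> f 0 = 0.
Proof. by case=> fD _ _ _; apply: (addrI (f 0)); rewrite -fD !addr0. Qed.

Lemma alg_hom_sumZ f n (a : 'I_n -> F2) (x : 'I_n -> A) : alg_hom f ->
  f (\sum_i a i *: x i) = \sum_i a i *: f (x i).
Proof.
move=> hf; have [fD _ _ fZ] := hf.
rewrite (big_morph f fD (alg_hom0 hf)).
by apply: eq_bigr => i _; rewrite fZ.
Qed.

Lemma alg_hom_acomm f x y : alg_hom f -> f (acomm x y) = acomm (f x) (f y).
Proof. by case=> fD fM _ _; rewrite /acomm fD !fM. Qed.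

Lemma alg_hom_scalar f (a : F2) : alg_hom f -> f a%:A = a%:A.
Proof. by case=> _ _ f1 fZ; rewrite fZ f1. Qed.

Lemma alg_hom_comp f h : alg_hom f -> alg_hom h -> alg_hom (h \o f).
Proof.
case=> fD fM f1 fZ [hD hM h1 hZ]; split=> /= [x y|x y||a x].
- by rewrite fD hD.
- by rewrite fM hM.
- by rewrite f1 h1.
- by rewrite fZ hZ.
Qed.

Lemma Cliff2_rel_hom f (c : F2) (gen : bool -> A) :
  alg_hom f -> Cliff2_rel c gen -> Cliff2_rel c (f \o gen).
Proof.
move=> hf [w2 z2 wz]; have [_ fM _ _] := hf.
by split=> /=; rewrite -?fM ?w2 ?z2 ?alg_hom0 // -alg_hom_acomm // wz alg_hom_scalar.
Qed.
End AlgHom.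

Section Presentation.
Variables (I : Type) (rel : forall B : algType F2, (I -> B) -> Prop).
Variables (A : algType F2) (g : I -> A).
Hypothesis HA : presents rel g.

Lemma presents_hom_ext (B : algType F2) (f1 f2 : A -> B) :
  alg_hom f1 -> alg_hom f2 -> @rel B (f1 \o g) ->
  (forall i, f1 (g i) = f2 (g i)) -> f1 =1 f2.
Proof.
move=> h1 h2 r e; have [_ uniq] := HA.2 B _ r.
exact: uniq h1 h2 (fun=> erefl) (fun i => esym (e i)).
Qed.

Lemma presents_endo_id (f : A -> A) :
  alg_hom f -> (forall i, f (g i) = g i) -> f =1 id.
Proof.
move=> hf fg x; apply/esym; apply: (@presents_hom_ext A id f) => //.
exact: HA.1.
Qed.
End Presentation.

Lemma presents_ext (I : Type) (rel1 rel2 : forall B : algType F2, (I -> B) -> Prop)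
    (A : algType F2) (g : I -> A) :
  (forall B h, rel1 B h <-> rel2 B h) -> presents rel1 g -> presents rel2 g.
Proof. by move=> E [r1 HA]; split=> [|B h /E]; [apply/E | apply: HA]. Qed.

Section Centralizer.
Variables (C : algType F2) (u : C).

Definition centralizes : {pred C} := fun x => x * u == u * x.

Fact centralizes_subalg_closed : GRing.subsemialg_closed centralizes.
Proof.
rewrite /centralizes; split=> [||a x|x y]; rewrite ?unfold_in /=.
- by rewrite mul1r mulr1.
- split=> [|x y]; rewrite ?unfold_in /=; first by rewrite mul0r mulr0.
  by move=> /eqP xu /eqP yu; rewrite mulrDl mulrDr xu yu.
- by move=> /eqP xu; rewrite -scalerAl xu scalerAr.
- by move=> /eqP xu /eqP yu; rewrite -mulrA yu mulrA xu mulrA.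
Qed.

Record centralizer := Centralizer { centralizer_val :> C; _ : centralizer_val \in centralizes }.
HB.instance Definition _ := [isSub for centralizer_val].
HB.instance Definition _ := [Choice of centralizer by <:].
HB.instance Definition _ :=
  GRing.SubChoice_isSubAlgebra.Build F2 C centralizes centralizer centralizes_subalg_closed.

Lemma Cliff2_image_centralizes (c : F2) (A : algType F2) (gen : bool -> A) (f : A -> C) :
  presents (Cliff2_rel c) gen -> alg_hom f ->
  (forall b, GRing.comm (f (gen b)) u) -> forall x, GRing.comm (f x) u.
Proof.
move=> HA hf fu.
(* f factors through the centralizer subalgebra of u. *)
pose h b : centralizer := Centralizer (introT eqP (fu b)).
have hval : alg_hom (centralizer_val : centralizer -> C) by [].
have [w2 z2 wz] := Cliff2_rel_hom hf HA.1.
have relh : Cliff2_rel c h by split; apply: val_inj; [exact: w2 | exact: z2 | exact: wz].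
have [[F [hF Fgen]] _] := HA.2 _ h relh.
have fF : centralizer_val \o F =1 f.
  apply: (presents_hom_ext HA) => [|||b] /=.
  - exact: alg_hom_comp.
  - exact: hf.
  - exact: Cliff2_rel_hom (alg_hom_comp hF hval) HA.1.
  - by rewrite Fgen.
by move=> x; rewrite -fF /=; case: (F x) => v vu; apply/eqP.
Qed.
End Centralizer.

(* Omega_nu with the pairing matrix P_nu - 1 replaced by an arbitrary M. *)
Definition cliff_mx_rel n (M : 'M[F2]_n) (B : algType F2) (g : 'I_n + 'I_n -> B) : Prop :=
  [/\ forall i j, acomm (g (inl i)) (g (inl j)) = 0,
      forall i j, acomm (g (inr i)) (g (inr j)) = 0,
      forall i, g (inl i) * g (inl i) = 0,
      forall i, g (inr i) * g (inr i) = 0 &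
      forall i j, acomm (g (inl i)) (g (inr j)) = (M i j)%:A].

Lemma mulmx3E n (L M U : 'M[F2]_n) i j :
  (L *m M *m U) i j = \sum_k \sum_k' L i k * U k' j * M k k'.
Proof.
rewrite mxE; under eq_bigr => k' _ do rewrite mxE big_distrl /=.
rewrite exchange_big; apply: eq_bigr => k _; apply: eq_bigr => k' _.
by rewrite mulrAC.
Qed.

Section BasisChange.
Variables (n : nat) (B : algType F2).
Implicit Types (L U M : 'M[F2]_n) (g : 'I_n + 'I_n -> B).

Definition basis_change L U g (x : 'I_n + 'I_n) : B :=
  match x with
  | inl i => \sum_k L i k *: g (inl k)
  | inr j => \sum_k U k j *: g (inr k)
  end.

Lemma eq_basis_change L U g1 g2 :
  g1 =1 g2 -> basis_change L U g1 =1 basis_change L U g2.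
Proof. by move=> e [i|j] /=; apply: eq_bigr => k _; rewrite e. Qed.

Lemma cliff_mx_rel_basis_change L M U g :
  cliff_mx_rel M g -> cliff_mx_rel (L *m M *m U) (basis_change L U g).
Proof.
case=> zz ww z2 w2 zw; split=> [i j|i j|i|i|i j] /=.
- by rewrite acomm_sumZ big1 // => k _; rewrite big1 // => k' _; rewrite zz scaler0.
- by rewrite acomm_sumZ big1 // => k _; rewrite big1 // => k' _; rewrite ww scaler0.
- exact: sqr_sumZ.
- exact: sqr_sumZ.
rewrite acomm_sumZ mulmx3E scaler_suml; apply: eq_bigr => k _.
by rewrite scaler_suml; apply: eq_bigr => k' _; rewrite zw scalerA.
Qed.

Lemma basis_change_mul L1 U1 L2 U2 g :
  basis_change L1 U1 (basis_change L2 U2 g) =1 basis_change (L1 *m L2) (U2 *m U1) g.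
Proof.
move=> [i|j] /=; under eq_bigr do rewrite scaler_sumr; rewrite exchange_big;
  apply: eq_bigr => k _; rewrite mxE scaler_suml; apply: eq_bigr => m _;
  by rewrite scalerA // mulrC.
Qed.

Lemma basis_change1 g : basis_change 1%:M 1%:M g =1 g.
Proof.
case=> [i|j] /=.
- rewrite (bigD1 i) //= big1 ?mxE ?eqxx ?scale1r ?addr0 // => k /negbTE ne.
  by rewrite mxE eq_sym ne scale0r.
- rewrite (bigD1 j) //= big1 ?mxE ?eqxx ?scale1r ?addr0 // => k /negbTE ne.
  by rewrite mxE ne scale0r.
Qed.

Lemma basis_changeK L U g : L \in unitmx -> U \in unitmx ->
  basis_change (invmx L) (invmx U) (basis_change L U g) =1 g.
Proof. by move=> uL uU x; rewrite basis_change_mul mulVmx // mulmxV // basis_change1. Qed.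

Lemma basis_changeKV L U g : L \in unitmx -> U \in unitmx ->
  basis_change L U (basis_change (invmx L) (invmx U) g) =1 g.
Proof. by move=> uL uU x; rewrite basis_change_mul mulmxV // mulVmx // basis_change1. Qed.
End BasisChange.

Lemma alg_hom_basis_change n (B C : algType F2) (f : B -> C) (L U : 'M[F2]_n)
    (g : 'I_n + 'I_n -> B) x :
  alg_hom f -> f (basis_change L U g x) = basis_change L U (f \o g) x.
Proof. by move=> hf; case: x => [i|j]; rewrite /= alg_hom_sumZ. Qed.

Lemma cliff_mx_iso n (L N U : 'M[F2]_n) (A : algType F2) (g : 'I_n + 'I_n -> A)
    (B : algType F2) (t : 'I_n + 'I_n -> B) :
  L \in unitmx -> U \in unitmx ->
  presents (cliff_mx_rel (L *m N *m U)) g -> presents (cliff_mx_rel N) t ->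
  exists f : A -> B, alg_iso f.
Proof.
move=> uL uU HA HB.
have relB : cliff_mx_rel (L *m N *m U) (basis_change L U t).
  exact: cliff_mx_rel_basis_change HB.1.
have relA : cliff_mx_rel N (basis_change (invmx L) (invmx U) g).
  have -> : N = invmx L *m (L *m N *m U) *m invmx U.
    by rewrite !mulmxA mulVmx // mul1mx -mulmxA mulmxV // mulmx1.
  exact: cliff_mx_rel_basis_change HA.1.
have [[Phi [hPhi PhiE]] _] := HA.2 B _ relB.
have [[Psi [hPsi PsiE]] _] := HB.2 A _ relA.
exists Phi; split=> //; exists Psi.
- apply: (presents_endo_id HA (alg_hom_comp hPhi hPsi)) => x /=.
  rewrite PhiE alg_hom_basis_change // (eq_basis_change _ _ PsiE).
  exact: basis_changeKV.
- apply: (presents_endo_id HB (alg_hom_comp hPsi hPhi)) => y /=.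
  rewrite PsiE alg_hom_basis_change // (eq_basis_change _ _ PhiE).
  exact: basis_changeK.
Qed.

Definition pair_gen n (k : 'I_n) (b : bool) : 'I_n + 'I_n := if b then inr k else inl k.

Lemma cliff_mx_rel_diag n (c : 'I_n -> F2) (B : algType F2) (g : 'I_n + 'I_n -> B) :
  cliff_mx_rel (diag_mx (\row_k c k)) g <->
  (forall k, Cliff2_rel (c k) (g \o pair_gen k)) /\
  (forall k k' b b', k != k' -> GRing.comm (g (pair_gen k b)) (g (pair_gen k' b'))).
Proof.
have DE k k' : diag_mx (\row_k c k) k k' = c k *+ (k == k') by rewrite !mxE.
split=> [[zz ww z2 w2 zw]|[cliff comm]].
  split=> [k|k k' [] [] /negbTE ne].
    by split; [exact: w2 | exact: z2 | rewrite /= acommC zw DE eqxx].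
  - by apply/acomm_eq0_comm; rewrite /= ww.
  - by apply/acomm_eq0_comm; rewrite /= acommC zw DE eq_sym ne scale0r.
  - by apply/acomm_eq0_comm; rewrite /= zw DE ne scale0r.
  - by apply/acomm_eq0_comm; rewrite /= zz.
have comm0 k k' b b' : k != k' -> acomm (g (pair_gen k b)) (g (pair_gen k' b')) = 0.
  by move=> ne; apply/acomm_eq0_comm; exact: comm.
split=> [i j|i j|i|i|i j].
- have [<-|ne] := eqVneq i j; first exact: acommxx.
  exact: (comm0 i j false false ne).
- have [<-|ne] := eqVneq i j; first exact: acommxx.
  exact: (comm0 i j true true ne).
- by case: (cliff i).
- by case: (cliff i).
- have [<-|ne] := eqVneq i j.
    by rewrite DE eqxx mulr1n acommC; case: (cliff i).
  by rewrite DE (negbTE ne) mulr0n scale0r; exact: (comm0 i j false true ne).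
Qed.

Lemma tensor_hom_ext m (A : 'I_m -> algType F2) (T : algType F2) (iota : forall k, A k -> T)
    (C : algType F2) (h1 h2 : T -> C) :
  is_tensor_family iota -> alg_hom h1 -> alg_hom h2 ->
  (forall k x, h1 (iota k x) = h2 (iota k x)) -> h1 =1 h2.
Proof.
move=> [hiota iotaC univ] hh1 hh2 e.
have h1C k k' (x : A k) (y : A k') : k != k' ->
    h1 (iota k x) * h1 (iota k' y) = h1 (iota k' y) * h1 (iota k x).
  by have [_ h1M _ _] := hh1; move=> ne; rewrite -!h1M iotaC.
have [_ uniq] := univ C _ (fun k => alg_hom_comp (hiota k) hh1) h1C.
by apply: (uniq h1 h2 hh1 hh2) => // k x; rewrite /= e.
Qed.

Section TensorOfCliff2.
Variables (n : nat) (c : 'I_n -> F2).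
Variables (A : 'I_n -> algType F2) (gen : forall k, bool -> A k).
Hypothesis HA : forall k, presents (Cliff2_rel (c k)) (gen k).
Variables (T : algType F2) (iota : forall k, A k -> T).
Hypothesis HT : is_tensor_family iota.

Definition tensor_gen (x : 'I_n + 'I_n) : T :=
  match x with inl k => iota (gen k false) | inr k => iota (gen k true) end.

Lemma tensor_genE k b : tensor_gen (pair_gen k b) = iota (gen k b).
Proof. by case: b. Qed.

Lemma tensor_presents_diag : presents (cliff_mx_rel (diag_mx (\row_k c k))) tensor_gen.
Proof.
have [hiota iotaC univ] := HT.
split=> [|B g].
  apply/cliff_mx_rel_diag; split=> [k|k k' b b' ne].
    by have := Cliff2_rel_hom (hiota k) (HA k).1; case.
  by rewrite /GRing.comm !tensor_genE iotaC.
move=> /cliff_mx_rel_diag [cliff comm]; split.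
  have hom_k k : {f : A k -> B | alg_hom f /\ forall b, f (gen k b) = g (pair_gen k b)}.
    by apply: constructive_indefinite_description; exact: ((HA k).2 B _ (cliff k)).1.
  pose f k := sval (hom_k k).
  have [hf fE] : (forall k, alg_hom (f k)) /\ (forall k b, f k (gen k b) = g (pair_gen k b)).
    by split=> k; case: (svalP (hom_k k)).
  have fC k k' (x : A k) (y : A k') : k != k' -> f k x * f k' y = f k' y * f k x.
    move=> ne.
    have fxC b' : GRing.comm (f k x) (f k' (gen k' b')).
      apply: (Cliff2_image_centralizes (HA k) (hf k)) => b.
      by rewrite !fE; exact: comm.
    apply/esym; apply: (Cliff2_image_centralizes (HA k') (hf k')) => b'.
    exact/esym/fxC.
  have [[Psi [hPsi PsiE]] _] := univ B f hf fC.
  by exists Psi; split=> // -[k|k]; rewrite /= PsiE fE.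
move=> h1 h2 hh1 hh2 e1 e2; apply: (tensor_hom_ext HT hh1 hh2) => k.
apply: (presents_hom_ext (HA k)) => [|||b] /=.
- exact: alg_hom_comp.
- exact: alg_hom_comp.
- exact: Cliff2_rel_hom (alg_hom_comp (hiota k) hh1) (HA k).1.
- by rewrite -tensor_genE e1 e2.
Qed.
End TensorOfCliff2.

Lemma mul_perm_mxE (R : pzRingType) m n (A : 'M[R]_(m, n)) (s : 'S_n) i j :
  (A *m perm_mx s) i j = A i ((s^-1)%g j).
Proof. by rewrite -[s in perm_mx s]invgK -col_permE mxE. Qed.

Section PermFixedSpace.
Variables (n : nat) (nu : {perm 'I_n}).
Local Notation l := #|porbits nu|.

Definition porbit_of (X : 'I_l) : {set 'I_n} := enum_val X.

Lemma porbit_ofP X : exists x, porbit_of X = porbit nu x.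
Proof. by rewrite /porbit_of; have /imsetP [x _ ->] := enum_valP X; exists x. Qed.

Lemma porbit_of_mem y : exists X, y \in porbit_of X.
Proof.
have yl : porbit nu y \in porbits nu by apply: imset_f.
by exists (enum_rank_in yl (porbit nu y)); rewrite /porbit_of enum_rankK_in // porbit_id.
Qed.

Lemma porbit_ofE X y : y \in porbit_of X -> porbit_of X = porbit nu y.
Proof. by have [x ->] := porbit_ofP X; rewrite -eq_porbit_mem => /eqP ->. Qed.

Lemma porbit_of_inj X Y y : y \in porbit_of X -> y \in porbit_of Y -> X = Y.
Proof.
by move=> /porbit_ofE yX /porbit_ofE yY; apply: enum_val_inj; exact: etrans yX (esym yY).
Qed.

Lemma mem_porbit_of_perm X y : (nu y \in porbit_of X) = (y \in porbit_of X).
Proof.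
have [x ->] := porbit_ofP X.
by rewrite -!eq_porbit_mem -[nu y]/((nu ^+ 1)%g y) porbit_perm.
Qed.

Lemma porbit_of_pick X : exists2 x, [pick x in porbit_of X] = Some x & x \in porbit_of X.
Proof.
case: pickP => [x xX|none]; first by exists x.
by have [x eX] := porbit_ofP X; have := none x; rewrite eX porbit_id.
Qed.

Definition orbit_mx : 'M[F2]_(l, n) := \matrix_(X, j) (j \in porbit_of X)%:R.
Definition orbit_rep_mx : 'M[F2]_(n, l) :=
  \matrix_(j, X) (Some j == [pick x in porbit_of X])%:R.

Lemma orbit_mxK : orbit_mx *m orbit_rep_mx = 1%:M.
Proof.
apply/matrixP => X Y; rewrite !mxE; under eq_bigr do rewrite !mxE.
have [y -> yY] := porbit_of_pick Y.
rewrite (bigD1 y) //= eqxx mulr1 big1 ?addr0 => [|k ky]; last first.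
  by case: eqP => [[eky]|]; [rewrite eky eqxx in ky | rewrite mulr0].
have [->|XY] := eqVneq X Y; first by rewrite yY.
by case yX: (y \in porbit_of X); rewrite // (porbit_of_inj yX yY) eqxx in XY.
Qed.

Lemma mxrank_orbit_mx : \rank orbit_mx = l.
Proof.
apply/eqP; rewrite eqn_leq rank_leq_row /=.
by rewrite -{1}(mxrank1 F2 l) -orbit_mxK mxrankM_maxl.
Qed.

Lemma orbit_mx_perm : orbit_mx *m perm_mx nu = orbit_mx.
Proof. by apply/matrixP => X j; rewrite mul_perm_mxE !mxE -mem_porbit_of_perm permKV. Qed.

Lemma perm_fixed_sub_orbit_mx (v : 'rV[F2]_n) : v *m perm_mx nu = v -> (v <= orbit_mx)%MS.
Proof.
move=> vP.
have v_perm y : v 0 (nu y) = v 0 y.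
  by have := congr1 (fun w : 'rV_n => w 0 (nu y)) vP; rewrite /= mul_perm_mxE permK.
have v_orbit x y : y \in porbit nu x -> v 0 y = v 0 x.
  case/porbitP=> i ->; elim: i => [|i IH]; first by rewrite expg0 perm1.
  by rewrite expgSr permM v_perm.
apply/submxP; exists (v *m orbit_rep_mx); apply/matrixP => i j.
rewrite (ord1 i) mxE; have [X jX] := porbit_of_mem j.
rewrite (bigD1 X) //= big1 ?addr0 => [|Y YX]; last first.
  rewrite !mxE; case jY: (j \in porbit_of Y); last by rewrite mulr0.
  by rewrite (porbit_of_inj jY jX) eqxx in YX.
rewrite !mxE jX mulr1; have [y yE yX] := porbit_of_pick X.
rewrite (bigD1 y) //= !mxE yE eqxx mulr1 big1 ?addr0 => [|k ky]; last first.
  by rewrite !mxE yE; case: eqP => [[eky]|]; [rewrite eky eqxx in ky | rewrite mulr0].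
by rewrite (v_orbit j y) // -(porbit_ofE jX).
Qed.

Lemma mxrank_perm_mx_sub1 : \rank (perm_mx nu - 1%:M : 'M[F2]_n) = (n - l)%N.
Proof.
have kerE : \rank (kermx (perm_mx nu - 1%:M : 'M[F2]_n)) = l.
  rewrite -mxrank_orbit_mx; apply/eqmx_rank/andP; split.
    apply/row_subP => i; apply: perm_fixed_sub_orbit_mx; apply/eqP; rewrite -subr_eq0.
    by rewrite -{2}[row i _]mulmx1 -mulmxBr -row_mul mulmx_ker row0.
  by apply/sub_kermxP; rewrite mulmxBr mulmx1 orbit_mx_perm subrr.
by rewrite -kerE mxrank_ker subKn // rank_leq_row.
Qed.
End PermFixedSpace.

Lemma Omega_rel_cliff_mx n (nu : {perm 'I_n}) (B : algType F2) (g : 'I_n + 'I_n -> B) :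
  Omega_rel nu g <-> cliff_mx_rel (perm_mx nu - 1%:M) g.
Proof.
have E i j : ((nu i == j)%:R - (i == j)%:R : B) = ((perm_mx nu - 1%:M) i j)%:A.
  by rewrite !mxE scalerBl !scaler_nat.
by split=> -[zz ww z2 w2 zw]; split=> // i j; rewrite zw E.
Qed.

Lemma pid_mx_diag n r : pid_mx r = diag_mx (\row_(k < n) (k < r)%:R) :> 'M[F2]_n.
Proof.
apply/matrixP => i j; rewrite !mxE.
have [->|ne] := eqVneq i j; first by rewrite eqxx mulr1n.
by rewrite [(i == j :> nat)](negbTE ne).
Qed.

Theorem proposition3p3
  (n : nat) (nu : {perm 'I_n})
  (Om : algType F2) (g : 'I_n + 'I_n -> Om)
  (Hom : @presents ('I_n + 'I_n) (@Omega_rel n nu) Om g)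
  (O1 : algType F2) (g1 : bool -> O1) (HO1 : @presents bool (Cliff2_rel 1) O1 g1)
  (Th : algType F2) (g0 : bool -> Th) (HTh : @presents bool (Cliff2_rel 0) Th g0)
  (T : algType F2)
  (iota : forall k : 'I_n,
     (if (k < n - ncycles nu)%N then O1 else Th) -> T)
  (HT : @is_tensor_family n (fun k : 'I_n => if (k < n - ncycles nu)%N then O1 else Th) T iota) :
  exists f : Om -> T, alg_iso f.
Proof.
set r := (n - ncycles nu)%N in iota HT.
pose M : 'M[F2]_n := perm_mx nu - 1%:M.
pose gen k : bool -> (if (k < r)%N then O1 else Th) :=
  if (k < r)%N as b return bool -> (if b then O1 else Th) then g1 else g0.
have Hgen k : presents (Cliff2_rel (k < r)%:R) (gen k) by rewrite /gen; case: (k < r)%N.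
have HM : M = col_ebase M *m diag_mx (\row_k (k < r)%:R) *m row_ebase M.
  by rewrite -pid_mx_diag /r /ncycles -mxrank_perm_mx_sub1 mulmx_ebase.
apply: (cliff_mx_iso (col_ebase_unit M) (row_ebase_unit M) _ (tensor_presents_diag Hgen HT)).
by rewrite -HM; apply: presents_ext Hom => B h; exact: Omega_rel_cliff_mx.
Qed.
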